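(* Let $q=3^m$ with $m\ge1$ and $f(x)=x^{q+2}$ on $\mathbb{F}_{q^2}$. If $q\ge 9$ then $\nu_2>0$, and if $q\ge 27$ then $\nu_5>0$.
   Context: $\beta_f(a,b)$ is the number of $(x,y)\in\mathbb{F}_{q^2}^2$ with $f(x)-f(y)=b$ and $f(x+a)-f(y+a)=b$. For the power function $f$, $\nu_i=\#\{b\in\mathbb{F}_{q^2}^*:\ \beta_f(1,b)=i\}$. *)

From mathcomp Require Import all_boot all_order all_algebra all_field.
Set Implicit Arguments. Unset Strict Implicit. Unset Printing Implicit Defensive.
Import GRing.Theory.
Local Open Scope ring_scope.

Definition boomerang_beta (F : finFieldType) (f : F -> F) (a b : F) : nat :=
  #|[set xy : F * F | (f xy.1 - f xy.2 == b) && (f (xy.1 + a) - f (xy.2 + a) == b)]|.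

Definition nu (F : finFieldType) (f : F -> F) (i : nat) : nat :=
  #|[set b : F | (b != 0) && (boomerang_beta f 1 b == i)]|.

Definition powf (F : finFieldType) (q : nat) : F -> F := fun x => x ^+ (q + 2).

From HB Require Import structures.
From mathcomp Require Import all_boot all_order all_algebra all_field.
From mathcomp Require Import cyclic ring zify.
Set Implicit Arguments. Unset Strict Implicit. Unset Printing Implicit Defensive.
Import GRing.Theory.
Local Open Scope ring_scope.

Lemma leq_card_fibers (T U : finType) (f : T -> U) (A : {set T}) (B : {set U}) k :
    {in A, forall x, f x \in B} ->
    (forall y, y \in B -> #|[set x in A | f x == y]| <= k)%N ->
  (#|A| <= #|B| * k)%N.
Proof.
move=> fAB fibk; rewrite -sum1_card (partition_big f (mem B)) //= -sum_nat_const.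
by apply: leq_sum => y By; rewrite sum1_card; move: (fibk y By); rewrite cardsE.
Qed.

Lemma card_fiber_le_kernel (V : finZmodType) (W : zmodType) (f : V -> W)
    (A : {set V}) y :
    {morph f : x x' / x - x'} -> {in A &, forall x x', x - x' \in A} ->
  (#|[set x in A | f x == y]| <= #|[set x in A | f x == 0%R]|)%N.
Proof.
move=> fB AB; have [->|[x0]] := set_0Vmem [set x in A | f x == y]; first by rewrite cards0.
rewrite inE => /andP[Ax0 /eqP fx0].
rewrite -(card_imset _ (subIr x0)); apply/subset_leq_card/subsetP => z /imsetP[x].
by rewrite !inE => /andP[Ax /eqP fx] ->; rewrite AB ?fB ?fx ?fx0 ?subrr /=.
Qed.

Lemma card_le_roots (F : finFieldType) (p : {poly F}) (A : {pred F}) d :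
  p != 0 -> (size p <= d.+1)%N -> {subset A <= root p} -> (#|A| <= d)%N.
Proof.
move=> p0 sz_p Ap; rewrite -ltnS (leq_trans _ sz_p) // cardE max_poly_roots //.
  by apply/allP => x; rewrite mem_enum => /Ap.
exact: enum_uniq.
Qed.

Lemma card_le_XnsubC (F : finFieldType) n (c : F) (A : {pred F}) :
  (0 < n)%N -> {subset A <= [pred x | x ^+ n == c]} -> (#|A| <= n)%N.
Proof.
move=> n_gt0 An; apply: (@card_le_roots _ ('X^n - c%:P)).
- by rewrite -size_poly_eq0 size_XnsubC.
- by rewrite size_XnsubC.
by move=> x /An; rewrite !inE rootE !hornerE subr_eq0.
Qed.

Section QConjugation.
Variables (F : fieldType) (p m : nat).
Hypothesis pcharF : p \in [pchar F].

Definition qconj of p \in [pchar F] := fun x : F => x ^+ (p ^ m).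

Lemma pchar_nat_expn n : [pchar F].-nat (p ^ n)%N.
Proof. by rewrite (eq_pnat _ (pcharf_eq pcharF)) pnatX pnat_id ?(pcharf_prime pcharF). Qed.

Fact qconj_is_nmod_morphism : nmod_morphism (qconj pcharF).
Proof.
have p_gt0 : (0 < p ^ m)%N by rewrite expn_gt0 prime_gt0 ?(pcharf_prime pcharF).
split=> [|x y]; first by rewrite /qconj expr0n eqn0Ngt p_gt0.
exact: exprDn_pchar (pchar_nat_expn m).
Qed.

Fact qconj_is_monoid_morphism : monoid_morphism (qconj pcharF).
Proof. by split=> [|x y]; rewrite /qconj ?expr1n ?exprMn. Qed.

HB.instance Definition _ := GRing.isNmodMorphism.Build F F (qconj pcharF)
  qconj_is_nmod_morphism.
HB.instance Definition _ := GRing.isMonoidMorphism.Build F F (qconj pcharF)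
  qconj_is_monoid_morphism.

Lemma qconjD x y : qconj pcharF (x + y) = qconj pcharF x + qconj pcharF y.
Proof. exact: rmorphD. Qed.
Lemma qconjB x y : qconj pcharF (x - y) = qconj pcharF x - qconj pcharF y.
Proof. exact: rmorphB. Qed.
Lemma qconjN x : qconj pcharF (- x) = - qconj pcharF x.
Proof. exact: rmorphN. Qed.
Lemma qconjM x y : qconj pcharF (x * y) = qconj pcharF x * qconj pcharF y.
Proof. exact: rmorphM. Qed.
Lemma qconjX x n : qconj pcharF (x ^+ n) = qconj pcharF x ^+ n.
Proof. exact: rmorphXn. Qed.
Lemma qconjV x : qconj pcharF x^-1 = (qconj pcharF x)^-1.
Proof. exact: fmorphV. Qed.
Lemma qconj1 : qconj pcharF 1 = 1.
Proof. exact: rmorph1. Qed.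
Lemma qconj0 : qconj pcharF 0 = 0.
Proof. exact: rmorph0. Qed.

End QConjugation.


Definition absTr (F : fieldType) p (m : nat) (pcharF : p \in [pchar F]) :=
  fun x : F => \sum_(j < m) qconj j pcharF x.

Fact absTr_is_nmod_morphism (F : fieldType) p m (pcharF : p \in [pchar F]) :
  nmod_morphism (absTr m pcharF).
Proof.
split=> [|x y]; first by apply: big1 => j _; rewrite rmorph0.
by rewrite /absTr -big_split; apply: eq_bigr => j _; rewrite rmorphD.
Qed.

HB.instance Definition _ (F : fieldType) p m (pcharF : p \in [pchar F]) :=
  GRing.isNmodMorphism.Build F F (absTr m pcharF) (absTr_is_nmod_morphism m pcharF).

HB.saturate prod.

Section FixedField.
Variables (F : finFieldType) (p m : nat).
Hypotheses (pcharF : p \in [pchar F]) (m_gt0 : (0 < m)%N).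
Hypothesis cardF : #|F| = ((p ^ m) ^ 2)%N.
Local Notation q := (p ^ m)%N.
Local Notation cj := (qconj m pcharF).
Local Notation Tr := (absTr m pcharF).

Definition Fq := [set x : F | cj x == x].

Lemma prime_pchar : prime p. Proof. exact: pcharf_prime pcharF. Qed.

Lemma q_gt1 : (1 < q)%N.
Proof. by rewrite -(expn0 p) ltn_exp2l ?prime_gt1 ?prime_pchar. Qed.

Lemma qconjK : involutive cj.
Proof. by move=> x; rewrite /qconj -exprM mulnn -cardF expf_card. Qed.

Lemma Fq_subr : {in Fq &, forall x y, x - y \in Fq}.
Proof. by move=> x y; rewrite !inE => /eqP xE /eqP yE; rewrite rmorphB /= xE yE. Qed.

Lemma card_Fq : (q <= #|Fq|)%N.
Proof.
have trFq x : x + cj x \in Fq by rewrite inE rmorphD /= qconjK addrC.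
have fiber y : y \in Fq -> (#|[set x in setT | (x + cj x == y)%R]| <= q)%N.
  move=> _; apply: (@card_le_roots _ ('X^q + ('X - y%:P))).
  - by rewrite -size_poly_eq0 size_polyDl size_polyXn ?size_XsubC ?ltnS ?q_gt1.
  - by rewrite size_polyDl size_polyXn ?size_XsubC ?ltnS ?q_gt1.
  by move=> x; rewrite !inE rootE !hornerE subr_eq0 addrC.
have := leq_card_fibers (fun x _ => trFq x) fiber.
by rewrite cardsT cardF -mulnn leq_pmul2r // ltnW ?q_gt1.
Qed.

Lemma absTr_frob x : x \in Fq -> Tr (x ^+ p) = Tr x.
Proof.
rewrite inE /absTr /qconj => /eqP xq; rewrite -(prednK m_gt0) in xq *.
rewrite big_ord_recr big_ord_recl /= -exprM -expnS xq expn0 expr1 addrC.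
by congr (_ + _); apply: eq_bigr => j _; rewrite -exprM -expnS.
Qed.

Lemma absTr_AS x : x \in Fq -> Tr (x ^+ p - x) = 0.
Proof. by move=> xFq; rewrite raddfB /= absTr_frob ?subrr. Qed.

Lemma absTr_nondeg e : e != 0 -> exists2 phi, phi \in Fq & Tr (phi * e) != 0.
Proof.
move=> e0; pose P := \sum_(j < m) e ^+ (p ^ j) *: 'X^(p ^ j).
have p_gt1 := prime_gt1 prime_pchar.
have [k mE] : exists k, m = k.+1 by exists m.-1; rewrite prednK.
have sizeP : size P = (p ^ k).+1.
  rewrite /P mE big_ord_recr /= addrC size_polyDl size_scale ?expf_neq0 ?size_polyXn //.
  apply: leq_ltn_trans (size_sum _ _ _) _; apply/bigmax_leqP => j _.
  by rewrite (leq_trans (size_scale_leq _ _)) // size_polyXn ltn_exp2l.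
have [phi phiFq Pphi] : exists2 phi, phi \in Fq & ~~ root P phi.
  apply/exists_inP; apply: contraTT card_Fq; rewrite negb_exists_in => /forall_inP P0.
  rewrite -ltnNge (@leq_ltn_trans (p ^ k)) ?mE ?ltn_exp2l //.
  apply: (@card_le_roots _ P); rewrite -?size_poly_eq0 ?sizeP //.
  by move=> x /P0; rewrite negbK.
exists phi => //; apply: contra Pphi => /eqP Tr0.
have PE : P.[phi] = Tr (phi * e).
  by rewrite horner_sum; apply: eq_bigr => j _; rewrite hornerZ hornerXn /qconj exprMn mulrC.
by rewrite rootE PE Tr0.
Qed.

Lemma exists_AS_no_root rho : rho \in Fq -> rho ^+ p != rho ->
  exists2 phi, phi \in Fq &
    forall Z, Z \in Fq -> rho * (Z ^+ p - Z) + (phi ^+ p - phi) != 0.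
Proof.
move=> rFq rp; have p_gt0 := prime_gt0 prime_pchar.
have r0 : rho != 0 by apply: contraNneq rp => ->; rewrite expr0n eqn0Ngt p_gt0.
have rq : rho ^+ q = rho by move: rFq; rewrite inE => /eqP.
pose s := rho ^+ (p ^ m.-1).
have sp : s ^+ p = rho by rewrite -exprM -expnSr prednK.
have sFq : s \in Fq by rewrite inE /qconj exprAC rq.
have s0 : s != 0 by rewrite expf_neq0.
have [|phi phiFq Tr_phi] := @absTr_nondeg (s^-1 - rho^-1).
  by rewrite subr_eq0; apply: contra rp => /eqP/invr_inj sr; rewrite -{1}sr sp.
exists phi => // Z ZFq; apply: contra Tr_phi => /eqP AS0.
have -> : phi * (s^-1 - rho^-1) = (rho * (Z ^+ p - Z) + (phi ^+ p - phi)) / rho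
    - ((Z ^+ p - Z) + ((phi / s) ^+ p - phi / s)).
  by rewrite expr_div_n sp; field; rewrite s0 r0.
rewrite AS0 mul0r sub0r raddfN raddfD /= !absTr_AS ?addr0 ?oppr0 //.
by rewrite inE rmorphM fmorphV /=; move: phiFq sFq; rewrite !inE => /eqP-> /eqP->.
Qed.

Lemma exists_AS_root rho : rho \in Fq -> rho != 0 -> (p ^ 2 < q)%N ->
  exists Z phi, [/\ Z \in Fq, phi \in Fq, phi ^+ p != phi &
    rho * (Z ^+ p - Z) + (phi ^+ p - phi) = 0].
Proof.
move=> rFq r0 p2q; pose g (x : F * F) := rho * (x.1 ^+ p - x.1) + (x.2 ^+ p - x.2).
have [[Z phi] /= /and4P[ZFq phiFq phi_p /eqP gx]|no_root] :=
  pickP [pred x | [&& x.1 \in Fq, x.2 \in Fq, x.2 ^+ p != x.2 & g x == 0]].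
  by exists Z, phi.
have frobB (a b : F) : (a - b) ^+ p = a ^+ p - b ^+ p.
  have pnat_p : [pchar F].-nat p by rewrite -[p]expn1 pchar_nat_expn.
  by rewrite exprDn_pchar // exprNn_pchar.
have gB : {morph g : x y / x - y} by move=> x y; rewrite /g !frobB; ring.
have gFq : {in setX Fq Fq, forall x, g x \in Fq}.
  move=> [Z phi]; rewrite !inE /= /g => /andP[/eqP ZE /eqP phiE].
  by rewrite rmorphD rmorphM !rmorphB !rmorphXn /= ZE phiE; move: rFq; rewrite inE => /eqP->.
have FqB : {in setX Fq Fq &, forall x y, x - y \in setX Fq Fq}.
  move=> [x1 x2] [y1 y2]; rewrite !in_setX /= => /andP[? ?] /andP[? ?].
  by rewrite !Fq_subr.
have ker : (#|[set x in setX Fq Fq | g x == 0%R]| <= p ^ 2)%N.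
  pose S := [set x : F | x ^+ p == x].
  have sizeP : size ('X^p - 'X : {poly F}) = p.+1.
    by rewrite size_polyDl size_polyXn // size_polyN size_polyX ltnS prime_gt1 ?prime_pchar.
  have cardS : (#|S| <= p)%N.
    apply: (@card_le_roots _ ('X^p - 'X)); rewrite -?size_poly_eq0 ?sizeP //.
    by move=> x; rewrite !inE rootE !hornerE subr_eq0.
  rewrite -mulnn (leq_trans _ (leq_mul cardS cardS)) // -cardsX.
  apply/subset_leq_card/subsetP => -[Z phi]; rewrite !inE /= => /andP[/andP[ZFq phiFq] /eqP gx].
  have := no_root (Z, phi); rewrite /= !inE ZFq phiFq gx eqxx andbT => /negbT/negPn/eqP phip.
  move: gx; rewrite /g /= phip subrr addr0 => /eqP.
  by rewrite mulf_eq0 (negbTE r0) subr_eq0 /= => ->; rewrite eqxx.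
have := leq_card_fibers gFq (fun y _ => leq_trans (card_fiber_le_kernel y gB FqB) ker).
rewrite cardsX leq_pmul2l ?(leq_trans _ card_Fq) ?expn_gt0 ?prime_gt0 ?prime_pchar //.
by move/(leq_trans card_Fq); rewrite leqNgt p2q.
Qed.

End FixedField.

Lemma exists_prim_root (F : finFieldType) : exists w : F, #|F|.-1.-primitive_root w.
Proof.
have n_gt0 : (0 < #|F|.-1)%N by rewrite -subn1 subn_gt0 finNzRing_gt1.
have unity x : x \in [set~ (0 : F)] -> #|F|.-1.-unity_root x.
  rewrite !inE unity_rootE => x0; apply/eqP/(mulIf x0).
  by rewrite -exprSr prednK ?expf_card ?mul1r // ltnW ?finNzRing_gt1.
have /hasP[w _ w_prim] : has #|F|.-1.-primitive_root (enum [set~ (0 : F)]).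
  apply: has_prim_root; rewrite ?enum_uniq //.
    by apply/allP => x; rewrite mem_enum; apply: unity.
  by rewrite -cardE cardsC1.
by exists w.
Qed.

Lemma exists_sqrt_neg1_norm (F : finFieldType) q : #|F| = (q ^ 2)%N -> odd q -> (4 < q)%N ->
  exists z : F, z ^+ q.+1 = -1 /\ z ^+ 8 != 1.
Proof.
move=> cardF odd_q q_gt4; have [w w_prim] := exists_prim_root F.
have qE : q = (q./2).*2.+1 by rewrite -[LHS]odd_double_half odd_q.
have nE : #|F|.-1 = ((q./2 * q.+1) * 2)%N by rewrite cardF {1 3}qE; nia.
exists (w ^+ q./2); rewrite -!exprM; split.
  have : (w ^+ (q./2 * q.+1)) ^+ 2 == 1 by rewrite -exprM -nE prim_expr_order.
  rewrite sqrf_eq1 -(prim_order_dvd w_prim) nE => /orP[|/eqP //].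
  have h_gt0 : (0 < q./2 * q.+1)%N by move: q_gt4; rewrite {1}qE; nia.
  by move=> /(dvdn_leq h_gt0); lia.
rewrite -(prim_order_dvd w_prim) nE; apply/negP => /dvdn_leq.
by move: q_gt4; rewrite {1 3}qE; nia.
Qed.

Lemma char3_eq (R : comNzRingType) : 3%N \in [pchar R] ->
  forall w x y : R, x - y = 3%:R * w -> x = y.
Proof. by move=> /pcharf0 h3 w x y /eqP; rewrite h3 mul0r subr_eq0 => /eqP. Qed.
Arguments char3_eq {R} _ w {x y}.

Lemma eq_sqr_mul (R : idomainType) (a b c d : R) : a != 0 ->
  a ^+ 2 = c ^+ 2 -> b * a = d * c -> (c = a /\ d = b) \/ (c = - a /\ d = - b).
Proof.
move=> a0 /eqP; rewrite eq_sym -subr_eq0 subr_sqr mulf_eq0 => /orP[] /eqP ca0 bd.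
  have ca : c = a by apply/eqP; rewrite -subr_eq0 ca0.
  by left; split=> //; apply: (mulIf a0); rewrite /= bd ca.
have ca : c = - a by apply/eqP; rewrite -addr_eq0 ca0.
by right; split=> //; apply: (mulIf a0); rewrite /= mulNr bd ca mulrN opprK.
Qed.

Lemma cube_sub_eq (R : idomainType) (x y : R) : 3%N \in [pchar R] ->
  x ^+ 3 - x = y ^+ 3 - y -> [\/ x = y, x = y + 1 | x = y - 1].
Proof.
move=> pchar3 xy; have : (x - y) * (x - y - 1) * (x - y + 1) = 0.
  by rewrite -(subrr (y ^+ 3 - y)) -{1}xy; apply: (char3_eq pchar3 (x * y ^+ 2 - x ^+ 2 * y)); ring.
move/eqP; rewrite !mulf_eq0 => /orP[/orP[]|] /eqP h.
- by apply: Or31; apply/eqP; rewrite -subr_eq0 h.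
- by apply: Or32; apply/eqP; rewrite -subr_eq0 -h; apply/eqP; ring.
- by apply: Or33; apply/eqP; rewrite -subr_eq0 -h; apply/eqP; ring.
Qed.

Section Boomerang.
Variables (F : finFieldType) (m : nat).
Hypotheses (pchar3 : 3%N \in [pchar F]) (cardF : #|F| = ((3 ^ m) ^ 2)%N).
Local Notation q := (3 ^ m)%N.
Local Notation cj := (qconj m pchar3).
Local Notation f := (@powf F q).
Local Notation cjK := (qconjK pchar3 cardF).
Local Notation eq3 := (char3_eq pchar3).
Local Notation cjE :=
  (cjK, qconjD, qconjB, qconjN, qconjX, qconjM, qconjV, qconj1, qconj0).

Definition hsum (u : F) := u ^+ 2 * cj u + cj u - u.
Definition hdiff (u : F) := u ^+ 2 - u * cj u.

Lemma powfE x : f x = x ^+ 2 * cj x.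
Proof. by rewrite /powf exprD mulrC. Qed.

Lemma powf_addr1 u : f (u + 1) = hsum u + hdiff u + 1.
Proof.
rewrite powfE rmorphD rmorph1 /hsum /hdiff /=.
by apply: (eq3 (u * cj u + u)); ring.
Qed.

Lemma powf_subr1 u : f (u - 1) = hsum u - hdiff u - 1.
Proof.
rewrite powfE rmorphB rmorph1 /hsum /hdiff /=.
by apply: (eq3 (u - u * cj u)); ring.
Qed.

Lemma hsumN u : hsum (- u) = - hsum u.
Proof. by rewrite /hsum rmorphN /=; ring. Qed.

Lemma hsum0 : hsum 0 = 0.
Proof. by rewrite /hsum qconj0; ring. Qed.

Lemma hdiffN u : hdiff (- u) = hdiff u.
Proof. by rewrite /hdiff rmorphN /=; ring. Qed.

Lemma hsum_real u : cj u = u -> hsum u = u ^+ 3.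
Proof. by rewrite /hsum => ->; ring. Qed.

Lemma boomerang_system x y b :
  (f x - f y == b) && (f (x + 1) - f (y + 1) == b) =
  (hsum (x - 1) - hsum (y - 1) == b) && (hdiff (x - 1) == hdiff (y - 1)).
Proof.
have shift (z : F) : z + 1 = (z - 1) - 1 by apply: (eq3 1); ring.
rewrite -{1}[x](subrK 1) -{1}[y](subrK 1) (shift x) (shift y).
rewrite !powf_addr1 !powf_subr1.
set S := hsum (x - 1) - hsum (y - 1); set D := hdiff (x - 1) - hdiff (y - 1).
rewrite -[hdiff _ == _]subr_eq0 -/D.
have -> : hsum (x - 1) + hdiff (x - 1) + 1 - (hsum (y - 1) + hdiff (y - 1) + 1) = S + D.
  by rewrite /S /D; ring.
have -> : hsum (x - 1) - hdiff (x - 1) - 1 - (hsum (y - 1) - hdiff (y - 1) - 1) = S - D.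
  by rewrite /S /D; ring.
apply/andP/andP=> [[/eqP SDb /eqP SDb']|[/eqP-> /eqP->]]; last by rewrite addr0 subr0.
have : (S + D) - (S - D) = - D by apply: (eq3 D); ring.
rewrite SDb SDb' subrr => /esym/eqP; rewrite oppr_eq0 => /eqP D0.
by move: SDb; rewrite D0 addr0 => ->.
Qed.

Lemma hdiff_conjD u : hdiff u + cj (hdiff u) = (u - cj u) ^+ 2.
Proof. by rewrite /hdiff rmorphB rmorphXn rmorphM /= cjK; ring. Qed.

Lemma hdiff_conjB u : hdiff u - cj (hdiff u) = (u + cj u) * (u - cj u).
Proof. by rewrite /hdiff rmorphB rmorphXn rmorphM /= cjK; ring. Qed.

Lemma hsum_hdiff_opp u v b : cj b != b ->
  hsum u - hsum v = b -> hdiff u = hdiff v -> v = - u.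
Proof.
move=> b_nreal hsb hd.
have sq : (u - cj u) ^+ 2 = (v - cj v) ^+ 2 by rewrite -!hdiff_conjD hd.
have pr : (u + cj u) * (u - cj u) = (v + cj v) * (v - cj v) by rewrite -!hdiff_conjB hd.
have [du0|du0] := eqVneq (u - cj u) 0.
  have : (v - cj v) ^+ 2 == 0 by rewrite -sq du0 expr0n.
  rewrite sqrf_eq0 subr_eq0 eq_sym => /eqP vr; move/eqP: du0.
  rewrite subr_eq0 eq_sym => /eqP ur; move: b_nreal.
  by rewrite -hsb !hsum_real // rmorphB !rmorphXn /= ur vr eqxx.
have uE x : x = - ((x + cj x) + (x - cj x)) by apply: (eq3 x); ring.
have [[dv sv]|[dv sv]] := eq_sqr_mul du0 sq pr; last by rewrite [v]uE sv dv -opprD -uE.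
by move: b_nreal; rewrite -hsb [v]uE sv dv -uE subrr rmorph0 eqxx.
Qed.

Lemma beta_hsum_fiber b : cj b != b ->
  boomerang_beta f 1 b = #|[set u | hsum u == - b]|.
Proof.
move=> b_nreal; rewrite /boomerang_beta.
have twice u : hsum u - hsum (- u) = - hsum u by rewrite hsumN; apply: (eq3 (hsum u)); ring.
have inj : injective (fun u : F => (u + 1, 1 - u)) by move=> u v [/addIr].
rewrite -(card_imset _ inj); apply: eq_card => -[x y].
rewrite inE /= boomerang_system; apply/idP/imsetP => [/andP[/eqP hs /eqP hd]|[u]].
  have yE := hsum_hdiff_opp b_nreal hs hd.
  exists (x - 1); last by rewrite subrK -yE addrC subrK.
  by rewrite inE -hs yE twice opprK.
rewrite inE => /eqP hu [-> ->].
have -> : 1 - u - 1 = - u by ring.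
by rewrite addrK hdiffN twice hu opprK !eqxx.
Qed.

Definition quintic (T D N : F) :=
  N ^+ 3 * (N + 1) ^+ 2 - T ^+ 2 * (N + 1) ^+ 2 + D ^+ 2 * N ^+ 2.

Definition norm_roots (c : F) := [set N | [&& cj N == N, N != 0, N + 1 != 0 &
  quintic (c + cj c) (c - cj c) N == 0]].

Definition root_lift (T D N : F) := - (T / N + D / (N + 1)).

Lemma hsum_conjD u : hsum u + cj (hsum u) = (u + cj u) * (u * cj u).
Proof. by rewrite /hsum !cjE; ring. Qed.

Lemma hsum_conjB u : hsum u - cj (hsum u) = (u - cj u) * (u * cj u + 1).
Proof.
by rewrite /hsum !cjE; apply: (eq3 (cj u - u)); ring.
Qed.

Lemma norm_hsum u c : hsum u = c -> cj c != c ->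
  u * cj u \in norm_roots c /\ root_lift (c + cj c) (c - cj c) (u * cj u) = u.
Proof.
move=> <- c_nreal; have cB := hsum_conjB u; rewrite hsum_conjD cB.
set N := u * cj u in cB *.
have N1 : N + 1 != 0.
  by apply: contraNneq c_nreal => N1; rewrite eq_sym -subr_eq0 cB N1 mulr0.
have N0 : N != 0.
  apply: contraNneq c_nreal => /eqP; rewrite mulf_eq0 => /orP[] /eqP u0.
    by rewrite u0 hsum0 qconj0.
  by rewrite -[u]cjK u0 qconj0 hsum0 qconj0.
split.
  have NR : cj N = N by rewrite /N qconjM cjK mulrC.
  rewrite inE NR eqxx N0 N1 hsum_conjD cB /quintic /=.
  by apply/eqP; apply: (eq3 (- N ^+ 3 * (N + 1) ^+ 2)); rewrite /N; ring.
by rewrite /root_lift mulfK // mulfK //; apply: (eq3 (- u)); ring.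
Qed.

Lemma hsum_root_lift c N : cj c != c -> N \in norm_roots c ->
  hsum (root_lift (c + cj c) (c - cj c) N) = c /\
  root_lift (c + cj c) (c - cj c) N * cj (root_lift (c + cj c) (c - cj c) N) = N.
Proof.
move=> c_nreal; rewrite inE => /and4P[/eqP NR N0 N1 /eqP PN].
set T := c + cj c; set D := c - cj c; set u := root_lift T D N.
have TR : cj T = T by rewrite /T qconjD cjK addrC.
have DI : cj D = - D by rewrite /D qconjB cjK opprB.
have uc : cj u = - (T / N - D / (N + 1)).
  rewrite /u /root_lift qconjN qconjD !qconjM !qconjV TR DI qconjD qconj1 NR.
  by rewrite mulNr opprD opprK.
have uN : u * cj u = N.
  rewrite uc /u /root_lift.
  have -> : - (T / N + D / (N + 1)) * - (T / N - D / (N + 1)) =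
      N - quintic T D N / (N ^+ 2 * (N + 1) ^+ 2).
    by rewrite /quintic; field; rewrite N0 N1.
  by rewrite PN mul0r subr0.
split=> //.
have -> : hsum u = u * (u * cj u) + cj u - u by rewrite /hsum; ring.
rewrite uN uc /u /root_lift; apply: (eq3 (- c + D / (N + 1))).
by rewrite /T /D; field; rewrite N0 N1.
Qed.

Lemma card_hsum_fiber c : cj c != c -> #|[set u | hsum u == c]| = #|norm_roots c|.
Proof.
move=> c_nreal.
have -> : norm_roots c = (fun u => u * cj u) @: [set u | hsum u == c].
  apply/setP => N; apply/idP/imsetP => [NR|[u]].
    have [hu uN] := hsum_root_lift c_nreal NR.
    by exists (root_lift (c + cj c) (c - cj c) N); rewrite ?inE ?hu.
  by rewrite inE => /eqP hu ->; case: (norm_hsum hu c_nreal).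
rewrite card_in_imset // => u v; rewrite !inE => /eqP hu /eqP hv uv.
by have [_ <-] := norm_hsum hu c_nreal; have [_ <-] := norm_hsum hv c_nreal; rewrite uv.
Qed.

Lemma sqr_imag_neq1 w : cj w = - w -> w ^+ 2 != 1.
Proof.
move=> wI; apply/negP => /eqP w2.
have wR : cj w = w.
  by move/eqP: (w2); rewrite sqrf_eq1 => /orP[] /eqP->; rewrite ?qconjN qconj1.
have ww : w + w = 0 by rewrite -{2}wR wI subrr.
have : - w = w + w by apply: (eq3 (- w)); ring.
rewrite ww => /eqP; rewrite oppr_eq0 => /eqP w0.
by move: w2; rewrite w0 expr0n => /eqP; rewrite eq_sym oner_eq0.
Qed.

Section Family.
Variables rho delta phi : F.
Hypotheses (rhoR : cj rho = rho) (rho0 : rho != 0).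
Hypotheses (deltaI : cj delta = - delta) (delta0 : delta != 0).
Hypothesis delta2 : delta ^+ 2 = 1 + rho ^+ 2.
Hypotheses (phiR : cj phi = phi) (phi3 : phi ^+ 3 != phi).

Definition lam := 1 + rho ^+ 2.
Definition den := lam * phi ^+ 2 - 1.
Definition sqm := lam * (phi - 1) ^+ 2.
Definition sqp := lam * (phi + 1) ^+ 2.
Definition trc := (1 - sqm) * (1 - sqp) / (rho * den ^+ 2).
Definition dfc := delta * lam ^+ 2 * phi * (1 - phi ^+ 2) / (rho * den ^+ 2).
Definition cfam := - (trc + dfc).
Definition cubic Y := rho ^+ 2 * Y ^+ 2 * (Y + lam) - lam ^+ 3 * (phi ^+ 3 - phi) ^+ 2.
Definition kappa := - lam * (phi ^+ 3 - phi) / rho.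

Lemma rho2 : rho ^+ 2 = lam - 1.
Proof. by rewrite /lam addrC addKr. Qed.

Lemma phi0 : phi != 0.
Proof. by apply: contraNneq phi3 => ->; rewrite expr0n. Qed.

Lemma phi_sub1 : phi - 1 != 0.
Proof. by rewrite subr_eq0; apply: contraNneq phi3 => ->; rewrite expr1n. Qed.

Lemma phi_add1 : phi + 1 != 0.
Proof.
rewrite addr_eq0; apply: contraNneq phi3 => ->.
by rewrite exprS sqrrN expr1n mulr1.
Qed.

Lemma phi3_sub : phi ^+ 3 - phi != 0.
Proof. by rewrite subr_eq0. Qed.

Lemma lam_sqr_neq1 a : cj a = a -> a != 0 -> lam * a ^+ 2 != 1.
Proof.
move=> aR a0; rewrite /lam -delta2 -exprMn sqr_imag_neq1 //.
by rewrite qconjM deltaI aR mulNr.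
Qed.

Lemma lam0 : lam != 0.
Proof. by rewrite /lam -delta2 expf_neq0. Qed.

Lemma den0 : den != 0.
Proof. by rewrite /den subr_eq0 lam_sqr_neq1 ?phi0. Qed.

Lemma sqm1 : 1 - sqm != 0.
Proof. by rewrite subr_eq0 eq_sym lam_sqr_neq1 ?phi_sub1 // qconjB phiR qconj1. Qed.

Lemma sqp1 : 1 - sqp != 0.
Proof. by rewrite subr_eq0 eq_sym lam_sqr_neq1 ?phi_add1 // qconjD phiR qconj1. Qed.

Lemma trc0 : trc != 0.
Proof. by rewrite /trc !mulf_neq0 ?invr_neq0 ?mulf_neq0 ?expf_neq0 ?sqm1 ?sqp1 ?den0. Qed.

Lemma dfc0 : dfc != 0.
Proof.
have phi2 : 1 - phi ^+ 2 != 0.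
  have -> : 1 - phi ^+ 2 = - ((phi - 1) * (phi + 1)) by ring.
  by rewrite oppr_eq0 mulf_neq0 ?phi_sub1 ?phi_add1.
by rewrite /dfc !mulf_neq0 ?invr_neq0 ?mulf_neq0 ?expf_neq0 ?lam0 ?phi0 ?den0.
Qed.

Lemma trc_real : cj trc = trc.
Proof.
by rewrite /trc /den /sqm /sqp /lam !cjE rhoR phiR.
Qed.

Lemma dfc_imag : cj dfc = - dfc.
Proof.
rewrite /dfc /den /lam !cjE rhoR phiR deltaI; ring.
Qed.

Lemma cfam_traces : cfam + cj cfam = trc /\ cfam - cj cfam = dfc.
Proof.
rewrite /cfam qconjN qconjD trc_real dfc_imag.
by split; [apply: (eq3 (- trc)) | apply: (eq3 (- dfc))]; ring.
Qed.

Lemma cfam_nreal : cj cfam != cfam.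
Proof.
apply: contra_neq dfc0 => c_real.
by rewrite -(proj2 cfam_traces) c_real subrr.
Qed.

Lemma quintic_factor_char3 Y :
  (lam - 1) * den * (1 + Y) ^+ 3 * (Y + lam * phi ^+ 2) ^+ 2
  - (1 - sqm) ^+ 2 * (1 - sqp) ^+ 2 * (Y + lam * phi ^+ 2) ^+ 2
  + lam ^+ 5 * phi ^+ 2 * (1 - phi ^+ 2) ^+ 2 * (1 + Y) ^+ 2
  = den * (Y + sqm) * (Y + sqp) * cubic Y.
Proof.
rewrite /den /sqm /sqp /cubic rho2.
apply: (eq3 (
  Y ^+ 4 * (- lam ^+ 3 * phi ^+ 2 + 2%:R * lam ^+ 2 * phi ^+ 2 + lam ^+ 2
    - lam * phi ^+ 2 - 2%:R * lam + 1)
  + Y ^+ 3 * (- lam ^+ 4 * phi ^+ 2 + 2%:R * lam ^+ 3 * phi ^+ 4 + lam ^+ 3 * phi ^+ 2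
    + lam ^+ 3 - 2%:R * lam ^+ 2 * phi ^+ 4 - lam ^+ 2 * phi ^+ 2 - lam ^+ 2
    + lam * phi ^+ 2 - lam + 1)
  + Y ^+ 2 * (2%:R * lam ^+ 4 * phi ^+ 6 - 2%:R * lam ^+ 4 * phi ^+ 4 + lam ^+ 4 * phi ^+ 2
    - lam ^+ 3 * phi ^+ 2 + lam ^+ 3 - 3%:R * lam ^+ 2 * phi ^+ 4
    - 3%:R * lam ^+ 2 * phi ^+ 2 - 2%:R * lam ^+ 2 + 3%:R * lam * phi ^+ 2 + lam)
  + Y * (2%:R * lam ^+ 5 * phi ^+ 8 - 4%:R * lam ^+ 5 * phi ^+ 6 + 2%:R * lam ^+ 5 * phi ^+ 4
    + 2%:R * lam ^+ 4 * phi ^+ 8 - lam ^+ 4 * phi ^+ 6 - 2%:R * lam ^+ 4 * phi ^+ 4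
    + 2%:R * lam ^+ 4 * phi ^+ 2 - 5%:R * lam ^+ 3 * phi ^+ 6 - 3%:R * lam ^+ 3 * phi ^+ 4
    - 4%:R * lam ^+ 3 * phi ^+ 2 + 3%:R * lam ^+ 2 * phi ^+ 4 + 2%:R * lam ^+ 2 * phi ^+ 2)
  + (lam ^+ 5 * phi ^+ 10 - 3%:R * lam ^+ 5 * phi ^+ 6 + 2%:R * lam ^+ 5 * phi ^+ 4
    - 2%:R * lam ^+ 4 * phi ^+ 8 - lam ^+ 4 * phi ^+ 6 - 2%:R * lam ^+ 4 * phi ^+ 4
    + lam ^+ 3 * phi ^+ 6 + lam ^+ 3 * phi ^+ 4))).
ring.
Qed.

Lemma quintic_factor N :
  rho ^+ 2 * den ^+ 6 * quintic trc dfc N =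
  den * (N * den - 1 + sqm) * (N * den - 1 + sqp) * cubic (N * den - 1).
Proof.
rewrite -quintic_factor_char3.
have rho2_0 : lam - 1 != 0 by rewrite -rho2 expf_neq0.
have trc2 : trc ^+ 2 = (1 - sqm) ^+ 2 * (1 - sqp) ^+ 2 / ((lam - 1) * den ^+ 4).
  by rewrite /trc -rho2; field; rewrite rho0 den0.
have dfc2 : dfc ^+ 2 = lam ^+ 5 * phi ^+ 2 * (1 - phi ^+ 2) ^+ 2 / ((lam - 1) * den ^+ 4).
  by rewrite /dfc -rho2 expr_div_n !exprMn delta2 -/lam; field; rewrite rho0 den0.
have -> : N * den - 1 + lam * phi ^+ 2 = den * (N + 1) by rewrite /den; ring.
by rewrite /quintic trc2 dfc2 rho2; field; rewrite den0 rho2_0.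
Qed.

Lemma quintic_rootsE N : (quintic trc dfc N == 0) =
  [|| N * den - 1 == - sqm, N * den - 1 == - sqp | cubic (N * den - 1) == 0].
Proof.
have nz : rho ^+ 2 * den ^+ 6 != 0 by rewrite mulf_neq0 ?expf_neq0 ?den0.
rewrite -[LHS]orFb -(negbTE nz) -mulf_eq0 quintic_factor.
by rewrite !mulf_eq0 (negbTE den0) -!addr_eq0 -orbA.
Qed.

Lemma cubic0 : cubic 0 != 0.
Proof.
have -> : cubic 0 = - (lam ^+ 3 * (phi ^+ 3 - phi) ^+ 2) by rewrite /cubic; ring.
by rewrite oppr_eq0 mulf_neq0 ?expf_neq0 ?lam0 ?phi3_sub.
Qed.

Lemma cubic_kappa Z : Z != 0 -> cubic (kappa / Z) =
  - (lam ^+ 3 * (phi ^+ 3 - phi) ^+ 2 / (rho * Z ^+ 3)) *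
    (rho * (Z ^+ 3 - Z) + (phi ^+ 3 - phi)).
Proof. by move=> Z0; rewrite /cubic /kappa; field; rewrite Z0 rho0. Qed.

Lemma kappa0 : kappa != 0.
Proof. by rewrite /kappa !mulf_neq0 ?oppr_eq0 ?lam0 ?phi3_sub ?invr_neq0. Qed.

Lemma kappa_real : cj kappa = kappa.
Proof. by rewrite /kappa /lam !cjE rhoR phiR. Qed.

Lemma cubic_real_root Y : cj Y = Y -> cubic Y = 0 ->
  exists2 Z, cj Z = Z /\ rho * (Z ^+ 3 - Z) + (phi ^+ 3 - phi) = 0 & Y = kappa / Z.
Proof.
move=> YR cY; have Y0 : Y != 0 by apply: contraNneq cubic0 => Y0; rewrite -{1}Y0 cY eqxx.
have Z0 : kappa / Y != 0 by rewrite mulf_neq0 ?kappa0 ?invr_neq0.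
have ZR : cj (kappa / Y) = kappa / Y by rewrite qconjM qconjV kappa_real YR.
have YE : Y = kappa / (kappa / Y) by rewrite invf_div mulrC divfK ?kappa0.
move: (kappa / Y) Z0 ZR YE => Z Z0 ZR YE; exists Z => //; split=> //.
have nz : lam ^+ 3 * (phi ^+ 3 - phi) ^+ 2 / (rho * Z ^+ 3) != 0.
  by rewrite !mulf_neq0 ?invr_neq0 ?mulf_neq0 ?expf_neq0 ?lam0 ?phi3_sub.
move: cY; rewrite YE cubic_kappa // => /eqP.
by rewrite mulf_eq0 oppr_eq0 (negbTE nz) => /eqP.
Qed.

Lemma cubic_neg_sqm : cubic (- sqm) != 0.
Proof.
have -> : cubic (- sqm) = lam ^+ 3 * (phi - 1) ^+ 2 * phi * (phi + 1) * (1 - sqm).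
  rewrite /cubic /sqm rho2; apply: (eq3 (lam ^+ 3 * phi * (phi - 1) ^+ 2 *
    (lam * (phi - 1) ^+ 2 - 2%:R * phi ^+ 2 + phi - 1))); ring.
by rewrite !mulf_neq0 ?expf_neq0 ?lam0 ?phi_sub1 ?phi0 ?phi_add1 ?sqm1.
Qed.

Lemma cubic_neg_sqp : cubic (- sqp) != 0.
Proof.
have -> : cubic (- sqp) = lam ^+ 3 * (phi + 1) ^+ 2 * phi * (phi - 1) * (1 - sqp).
  rewrite /cubic /sqp rho2; apply: (eq3 (- lam ^+ 3 * phi * (phi + 1) ^+ 2 *
    (lam * (phi + 1) ^+ 2 - 2%:R * phi ^+ 2 - phi - 1))); ring.
by rewrite !mulf_neq0 ?expf_neq0 ?lam0 ?phi_sub1 ?phi0 ?phi_add1 ?sqp1.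
Qed.

Lemma quintic_root_neq0 N : quintic trc dfc N == 0 -> (N != 0) && (N + 1 != 0).
Proof.
move=> qN; apply/andP; split; apply: contraTneq qN.
  move=> ->; have -> : quintic trc dfc 0 = - trc ^+ 2 by rewrite /quintic; ring.
  by rewrite oppr_eq0 expf_neq0 ?trc0.
move=> /eqP; rewrite addr_eq0 => /eqP->.
have -> : quintic trc dfc (-1) = dfc ^+ 2 by rewrite /quintic; ring.
by rewrite expf_neq0 ?dfc0.
Qed.

Definition AS_roots :=
  [set Z | (cj Z == Z) && (rho * (Z ^+ 3 - Z) + (phi ^+ 3 - phi) == 0)].

Definition norm_of Z := (1 + kappa / Z) / den.

Lemma norm_ofE Z : norm_of Z * den - 1 = kappa / Z.
Proof. by rewrite /norm_of divfK ?den0 // addrC addKr. Qed.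

Lemma den_real : cj den = den.
Proof. by rewrite /den /lam !cjE rhoR phiR. Qed.

Lemma sqm_real : cj sqm = sqm.
Proof. by rewrite /sqm /lam !cjE rhoR phiR. Qed.

Lemma sqp_real : cj sqp = sqp.
Proof. by rewrite /sqp /lam !cjE rhoR phiR. Qed.

Lemma AS_root_neq0 Z : Z \in AS_roots -> Z != 0.
Proof.
rewrite inE => /andP[_]; apply: contraTneq => ->.
by rewrite expr0n subr0 mulr0 add0r phi3_sub.
Qed.

Lemma cubic_norm_of Z : Z \in AS_roots -> cubic (norm_of Z * den - 1) == 0.
Proof.
move=> ASZ; rewrite norm_ofE cubic_kappa ?AS_root_neq0 //.
by move: ASZ; rewrite inE => /andP[_ /eqP->]; rewrite mulr0.
Qed.

Lemma norm_roots_cfam : norm_roots cfam =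
  (1 - sqm) / den |: ((1 - sqp) / den |: [set norm_of Z | Z in AS_roots]).
Proof.
have [ctr cdf] := cfam_traces.
have Yeq N a : (N * den - 1 == - a) = (N == (1 - a) / den).
  apply/eqP/eqP => [E|->]; last by field; rewrite den0.
  by rewrite -[a]opprK -E; field; rewrite den0.
have frac_real a : cj a = a -> cj ((1 - a) / den) = (1 - a) / den.
  by move=> aR; rewrite qconjM qconjV qconjB qconj1 aR den_real.
apply/setP => N; rewrite !inE ctr cdf.
apply/idP/idP => [/and4P[/eqP NR _ _]|Nroot].
  have YR : cj (N * den - 1) = N * den - 1 by rewrite qconjB qconjM qconj1 NR den_real.
  rewrite quintic_rootsE !Yeq => /or3P[-> // | -> | /eqP cY]; rewrite ?orbT //.
  have [Z [ZR ASZ] YZ] := cubic_real_root YR cY.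
  apply/orP; right; apply/orP; right; apply/imsetP; exists Z.
    by rewrite inE ZR ASZ !eqxx.
  by rewrite /norm_of -YZ; field; rewrite den0.
suff /andP[NR qN] : (cj N == N) && (quintic trc dfc N == 0).
  by rewrite NR qN andbT quintic_root_neq0.
rewrite quintic_rootsE !Yeq; move: Nroot => /or3P[/eqP-> | /eqP-> | /imsetP[Z]].
- by rewrite frac_real ?sqm_real ?eqxx.
- by rewrite frac_real ?sqp_real ?eqxx ?orbT.
move=> ASZ ->; rewrite cubic_norm_of // !orbT andbT.
move: ASZ; rewrite inE => /andP[/eqP ZR _].
rewrite /norm_of qconjM qconjV qconjD qconj1 qconjM qconjV.
by rewrite ZR kappa_real den_real.
Qed.


Lemma card_norm_roots_cfam : #|norm_roots cfam| = (#|AS_roots| + 2)%N.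
Proof.
have not_img a : cubic (- a) != 0 -> (1 - a) / den \notin [set norm_of Z | Z in AS_roots].
  move=> ca; apply/imsetP => -[Z ASZ aZ]; move: (cubic_norm_of ASZ).
  by rewrite -aZ divfK ?den0 // addrC addKr (negbTE ca).
have sqmp : (1 - sqm) / den != (1 - sqp) / den.
  apply: contraNneq (mulf_neq0 lam0 phi0) => e; apply/eqP.
  have <- : sqp - sqm = lam * phi by apply: (eq3 (lam * phi)); rewrite /sqp /sqm; ring.
  have -> : sqp - sqm = ((1 - sqm) / den - (1 - sqp) / den) * den.
    by field; rewrite den0.
  by rewrite e subrr mul0r.
rewrite norm_roots_cfam !cardsU1 in_setU1 negb_or sqmp.
rewrite !not_img ?cubic_neg_sqm ?cubic_neg_sqp // card_in_imset; first by rewrite addn2.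
move=> Z1 Z2 /AS_root_neq0 Z10 /AS_root_neq0 Z20.
by move/(congr1 (fun N => N * den - 1)); rewrite !norm_ofE => /(mulfI kappa0)/invr_inj.
Qed.
End Family.

Lemma card_AS_roots rho phi Z0 : rho != 0 -> Z0 \in AS_roots rho phi ->
  #|AS_roots rho phi| = 3.
Proof.
move=> rho0; rewrite inE => /andP[/eqP Z0R /eqP ASZ0].
have shift e : e ^+ 3 = e -> (Z0 + e) ^+ 3 - (Z0 + e) = Z0 ^+ 3 - Z0.
  by move=> e3; rewrite -{2}e3; apply: (eq3 (Z0 ^+ 2 * e + Z0 * e ^+ 2)); ring.
have -> : AS_roots rho phi = [set Z0; Z0 + 1; Z0 - 1].
  apply/setP => Z; rewrite !inE; apply/andP/idP => [[_ /eqP ASZ]|].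
    have : Z ^+ 3 - Z = Z0 ^+ 3 - Z0 by apply: (mulfI rho0); apply: (addIr (phi ^+ 3 - phi)); rewrite ASZ ASZ0.
    by case/(cube_sub_eq pchar3) => ->; rewrite eqxx ?orbT.
  move=> /orP[/orP[]|] /eqP->; split; rewrite ?qconjD ?qconjN ?qconj1 ?Z0R //.
  - exact/eqP.
  - by rewrite shift ?expr1n ?ASZ0.
  - by rewrite shift ?ASZ0 //; ring.
have d1 : Z0 - 1 != Z0 by rewrite -subr_eq0 addrAC subrr add0r oppr_eq0 oner_eq0.
have d2 : Z0 - 1 != Z0 + 1.
  by rewrite -subr_eq0 (_ : _ - _ = 1) ?oner_eq0 //; apply: (eq3 (-1)); ring.
have d3 : Z0 != Z0 + 1 by rewrite -subr_eq0 opprD addrA subrr add0r oppr_eq0 oner_eq0.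
by rewrite setUC cardsU1 cards2 !inE negb_or d1 d2 d3.
Qed.


Lemma nu_family_gt0 rho delta phi :
  cj rho = rho -> rho != 0 -> cj delta = - delta -> delta != 0 ->
  delta ^+ 2 = 1 + rho ^+ 2 -> cj phi = phi -> phi ^+ 3 != phi ->
  (0 < nu f (#|AS_roots rho phi| + 2))%N.
Proof.
move=> rhoR rho0 deltaI delta0 delta2 phiR phi3.
have c_nreal := cfam_nreal rhoR rho0 deltaI delta0 delta2 phiR phi3.
apply/card_gt0P; exists (- cfam rho delta phi); rewrite inE oppr_eq0.
have b_nreal : cj (- cfam rho delta phi) != - cfam rho delta phi.
  by rewrite qconjN; apply: contra c_nreal => /eqP/oppr_inj->.
rewrite beta_hsum_fiber // opprK card_hsum_fiber // card_norm_roots_cfam // eqxx andbT.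
by apply: contraNneq c_nreal => ->; rewrite qconj0.
Qed.

Lemma family_params z : z ^+ q.+1 = -1 -> z ^+ 8 != 1 ->
  [/\ cj (z^-1 - z) = z^-1 - z, cj (z + z^-1) = - (z + z^-1),
      (z + z^-1) ^+ 2 = 1 + (z^-1 - z) ^+ 2, z + z^-1 != 0 &
      (z^-1 - z) ^+ 3 != z^-1 - z].
Proof.
move=> zq z8; have z0 : z != 0.
  apply/eqP => z0; move: zq; rewrite z0 expr0n /= => /eqP.
  by rewrite eq_sym oppr_eq0 oner_eq0.
have cz : cj z = - z^-1 by apply: (mulIf z0); rewrite mulNr mulVf // -exprSr.
have e8 : z ^+ 8 - 1 = - z ^+ 4 * (z + z^-1) * ((z^-1 - z) ^+ 3 - (z^-1 - z)).
  by apply: (eq3 (z ^+ 6 - z ^+ 2)); field.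
move: z8; rewrite -subr_eq0 e8 !mulf_eq0 oppr_eq0 !negb_or subr_eq0.
case/andP=> /andP[_ delta0] rho3; split=> //.
- by rewrite qconjB qconjV cz invrN invrK; ring.
- by rewrite qconjD qconjV cz invrN invrK; ring.
by apply: (eq3 1); field.
Qed.

Section Existence.
Hypothesis m_gt0 : (0 < m)%N.

Lemma exists_family_params : (9 <= q)%N -> exists z : F,
  [/\ cj (z^-1 - z) = z^-1 - z, cj (z + z^-1) = - (z + z^-1),
      (z + z^-1) ^+ 2 = 1 + (z^-1 - z) ^+ 2, z + z^-1 != 0 &
      (z^-1 - z) ^+ 3 != z^-1 - z].
Proof.
move=> q_ge9; have odd_q : odd q by rewrite oddX orbT.
have [z [zq z8]] := exists_sqrt_neg1_norm cardF odd_q (leq_trans (isT : 4 < 9)%N q_ge9).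
by exists z; apply: family_params.
Qed.

Lemma nu2_gt0 : (9 <= q)%N -> (0 < nu f 2)%N.
Proof.
case/exists_family_params => z [rhoR deltaI delta2 delta0 rho3].
have rho0 : z^-1 - z != 0 by apply: contraNneq rho3 => ->; rewrite expr0n.
have rhoFq : z^-1 - z \in Fq m pchar3 by rewrite inE rhoR.
have [phi phiFq noAS] := exists_AS_no_root m_gt0 cardF rhoFq rho3.
have phi3 : phi ^+ 3 != phi.
  by move: (noAS 0); rewrite inE qconj0 eqxx expr0n subrr mulr0 add0r subr_eq0 => ->.
have phiR : cj phi = phi by move: phiFq; rewrite inE => /eqP.
have := nu_family_gt0 rhoR rho0 deltaI delta0 delta2 phiR phi3.
suff -> : #|AS_roots (z^-1 - z) phi| = 0%N by [].
apply: eq_card0 => Z; rewrite inE; apply/negP => /andP[ZR /eqP ASZ].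
by move: (noAS Z); rewrite inE ZR ASZ eqxx => /(_ isT).
Qed.

Lemma nu5_gt0 : (27 <= q)%N -> (0 < nu f 5)%N.
Proof.
move=> q_ge27; have [z [rhoR deltaI delta2 delta0 rho3]] :=
  exists_family_params (leq_trans (isT : 9 <= 27)%N q_ge27).
have rho0 : z^-1 - z != 0 by apply: contraNneq rho3 => ->; rewrite expr0n.
have rhoFq : z^-1 - z \in Fq m pchar3 by rewrite inE rhoR.
have [Z [phi [ZFq phiFq phi3 ASZ]]] :=
  exists_AS_root m_gt0 cardF rhoFq rho0 (leq_trans (isT : 10 <= 27)%N q_ge27).
have phiR : cj phi = phi by move: phiFq; rewrite inE => /eqP.
have := nu_family_gt0 rhoR rho0 deltaI delta0 delta2 phiR phi3.
rewrite (card_AS_roots rho0 (Z0 := Z)) //.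
by move: ZFq; rewrite !inE => ->; rewrite ASZ eqxx.
Qed.

End Existence.
End Boomerang.

Local Close Scope ring_scope.

Theorem proposition9 (m : nat) (F : finFieldType) :
  (1 <= m)%N ->
  #|F| = (3 ^ m) ^ 2 ->
  ((9 <= 3 ^ m)%N -> (0 < nu (@powf F (3 ^ m)) 2)%N) /\
  ((27 <= 3 ^ m)%N -> (0 < nu (@powf F (3 ^ m)) 5)%N).
Proof.
move=> m_gt0 cardF.
have pchar3 : (3%N \in [pchar F])%R by apply: (@card_finPcharP _ 3 (m * 2)); rewrite ?expnM.
by split; [exact: nu2_gt0 | exact: nu5_gt0].
Qed.
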